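(* Let $\Sigma'\subseteq\Sigma$ be alphabets with $\Pi=\Sigma\setminus\Sigma'$ finite, and let $R\subseteq\Sigma^*\times\Sigma^*$ be finite. If $D\subseteq R$ is a family of $\Sigma$-defining relations for $\Pi$ whose derived generator graph $\Gamma_D(D)$ is acyclic, then there exist a set $Q\subseteq(\Sigma')^*\times(\Sigma')^*$ with $|Q|\le|R\setminus D|$ and a sequence of Tietze transformations between $\langle\Sigma\mid R\rangle$ and $\langle\Sigma'\mid Q\rangle$ whose length lies between $n+k$ and $2n+k$, where $n=|R|-|R\cap((\Sigma')^*\times(\Sigma')^* )|-|D|$ and $k=|\Pi|$.
   Context: For an alphabet $\Sigma$, $\Sigma^*$ is the free monoid of words over $\Sigma$. For $R\subseteq\Sigma^*\times\Sigma^*$ (elements written $q\approx r$), $\langle\Sigma\mid R\rangle$ is the quotient of $\Sigma^*$ by the smallest congruence containing $R$, and $u\sim_Rv$ means $u$ rewrites to $v$ by finitely many steps replacing a subword $q$ by $r$ or $r$ by $q$ with $(q,r)\in R$. The Tietze transformations on presentations are: $\mathbf{Gen}(+)$: from $\langle\Sigma\mid R\rangle$ to $\langle\Sigma\cup\{x\}\mid R\cup\{x\approx w\}\rangle$ with $x\notin\Sigma$, $w\in\Sigma^*$; $\mathbf{Gen}(-)$: if $x\approx w$ is in $R$ and $Q=R\setminus\{x\approx w\}\subseteq\Pi^*\times\Pi^*$ where $\Pi=\Sigma\setminus\{x\}$, from $\langle\Sigma\mid R\rangle$ to $\langle\Pi\mid Q\rangle$; $\mathbf{Rel}(+)$: if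 $q\sim_Rr$, from $\langle\Sigma\mid R\rangle$ to $\langle\Sigma\mid R\cup\{q\approx r\}\rangle$; $\mathbf{Rel}(-)$: if $q\approx r$ is in $R$ and $q\sim_Qr$ with $Q=R\setminus\{q\approx r\}$, from $\langle\Sigma\mid R\rangle$ to $\langle\Sigma\mid Q\rangle$. A sequence of Tietze transformations of length $m$ between two presentations is a chain of $m+1$ presentations from the first to the second in which each consecutive pair is related by a single Tietze transformation (applied in either direction). A $\Sigma$-defining relation for $x\in\Sigma$ is a relation $x\approx w$ with $w\in\Sigma^*$; a family of $\Sigma$-defining relations for $\Pi\subseteq\Sigma$ is a set $\{r_x\mid x\in\Pi\}$ with each $r_x$ a $\Sigma$-defining relation for $x$. Its derived generator graph $\Gamma_D(D)$ has vertex set $\Pi$ and an edge $(x,y)$ whenever $y$ occurs in the right-hand side of $r_x$. A directed graph is acyclic if it has no directed path of positive length from a vertex to itself. *)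

From HB Require Import structures.
From mathcomp Require Import all_boot all_order.
From mathcomp Require Import finmap.
From Stdlib Require Import Relations.
Set Implicit Arguments. Unset Strict Implicit. Unset Printing Implicit Defensive.
Local Open Scope fset_scope.

Section Presentations.
Variable A : choiceType.

Definition word_over (S : pred A) (w : seq A) : bool := all S w.

Definition rel := (seq A * seq A)%type.

Definition rels_over (S : pred A) (R : {fset rel}) : Prop :=
  forall p, p \in R -> word_over S p.1 && word_over S p.2.

Record pres := Pres { palpha : pred A; prels : {fset rel} }.

Definition wf (P : pres) : Prop := rels_over (palpha P) (prels P).

Definition rstep (R : {fset rel}) (u v : seq A) : Prop :=
  exists p s q r, (q, r) \in R /\
    ((u = p ++ q ++ s /\ v = p ++ r ++ s) \/ (u = p ++ r ++ s /\ v = p ++ q ++ s)).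

Definition rconv (R : {fset rel}) : relation (seq A) := clos_refl_trans _ (rstep R).

(* A single Tietze transformation (in its defining direction), applied to a
   well-formed presentation; alphabets are compared extensionally. *)
Inductive tietze : pres -> pres -> Prop :=
| GenPlus (S S2 : pred A) (R : {fset rel}) (x : A) (w : seq A) :
    rels_over S R -> ~~ S x -> word_over S w ->
    (forall a, S2 a = S a || (a == x)) ->
    tietze (Pres S R) (Pres S2 (R `|` [fset ([:: x], w)]))
| GenMinus (S S2 : pred A) (R : {fset rel}) (x : A) (w : seq A) :
    rels_over S R -> ([:: x], w) \in R ->
    (forall a, S2 a = S a && (a != x)) ->
    rels_over S2 (R `\ ([:: x], w)) ->
    tietze (Pres S R) (Pres S2 (R `\ ([:: x], w)))
| RelPlus (S : pred A) (R : {fset rel}) (q r : seq A) :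
    rels_over S R -> word_over S q -> word_over S r -> rconv R q r ->
    tietze (Pres S R) (Pres S (R `|` [fset (q, r)]))
| RelMinus (S : pred A) (R : {fset rel}) (q r : seq A) :
    rels_over S R -> (q, r) \in R -> rconv (R `\ (q, r)) q r ->
    tietze (Pres S R) (Pres S (R `\ (q, r))).

Definition tietze_either (P1 P2 : pres) : Prop := tietze P1 P2 \/ tietze P2 P1.

Inductive tietze_seq : pres -> pres -> nat -> Prop :=
| TSnil P : tietze_seq P P 0
| TScons P1 P2 P3 m : tietze_seq P1 P2 m -> tietze_either P2 P3 ->
    tietze_seq P1 P3 m.+1.

Definition defining_family (S : pred A) (Pi : {fset A}) (D : {fset rel}) : Prop :=
  exists wx : A -> seq A, (forall x, x \in Pi -> word_over S (wx x)) /\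
    D = [fset ([:: x], wx x) | x in Pi].

Definition derived_edge (Pi : {fset A}) (D : {fset rel}) (x y : A) : Prop :=
  x \in Pi /\ y \in Pi /\ exists w, ([:: x], w) \in D /\ y \in w.

Definition acyclic (V : Type) (E : relation V) : Prop :=
  forall v, ~ clos_trans V E v v.

End Presentations.

From HB Require Import structures.
From mathcomp Require Import all_boot all_order.
From mathcomp Require Import finmap boolp.
From Stdlib Require Import Relations Wf_nat.
Set Implicit Arguments. Unset Strict Implicit. Unset Printing Implicit Defensive.
Local Open Scope fset_scope.

(* Acyclicity of the derived generator graph makes every Sigma-word equal, modulo
   the defining relations D, to a Sigma'-word: replace each generator of Pi by its
   defining word and recurse, which terminates because the graph is acyclic.  Each of
   the n relations of R \ D that is not already over Sigma' is then traded for its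
   Sigma'-expansion by one Rel(+) and one Rel(-), and afterwards the k generators of
   Pi are deleted by Gen(-), each time choosing one that occurs in no remaining
   defining word.  The resulting sequence has length exactly 2n + k. *)

Definition rel_over (A : choiceType) (S : pred A) (p : seq A * seq A) :=
  word_over S p.1 && word_over S p.2.

Section Rewriting.
Variable A : choiceType.
Implicit Types (R B C : {fset (seq A * seq A)}) (u v w : seq A).

Lemma rstep_sym R u v : rstep R u v -> rstep R v u.
Proof. by move=> [p [s [q [r [qr [[-> ->]|[-> ->]]]]]]]; exists p, s, q, r; tauto. Qed.

Lemma rconv_sym R u v : rconv R u v -> rconv R v u.
Proof.
elim=> [x y /rstep_sym xy|x|x y z _ yx _ zy]; [exact: rt_step|exact: rt_refl|].
exact: rt_trans zy yx.
Qed.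

Lemma rconv_rel R q r : (q, r) \in R -> rconv R q r.
Proof. by move=> qr; apply: rt_step; exists [::], [::], q, r; rewrite !cats0; tauto. Qed.

Lemma rconv_subset B C u v : B `<=` C -> rconv B u v -> rconv C u v.
Proof.
move=> /fsubsetP BC; elim=> [x y|x|x y z _ xy _ yz]; [|exact: rt_refl|exact: rt_trans xy yz].
by move=> [p [s [q [r [/BC qr step]]]]]; apply: rt_step; exists p, s, q, r.
Qed.

Lemma rconv_context R s t u v : rconv R u v -> rconv R (s ++ u ++ t) (s ++ v ++ t).
Proof.
elim=> [x y|x|x y z _ xy _ yz]; [|exact: rt_refl|exact: rt_trans xy yz].
move=> [p [p' [q [r [qr step]]]]]; apply: rt_step; exists (s ++ p), (p' ++ t), q, r.
by split=> //; rewrite -!catA; case: step => [[-> ->]|[-> ->]]; rewrite -!catA; tauto.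
Qed.

Lemma rconv_cat R u u' v v' :
  rconv R u u' -> rconv R v v' -> rconv R (u ++ v) (u' ++ v').
Proof.
move=> uu' vv'; apply: (rt_trans _ _ _ (u' ++ v)).
  exact: (rconv_context [::] v uu').
by rewrite -[v]cats0 -[v']cats0; exact: rconv_context.
Qed.

Lemma rconv_letterwise R (S : pred A) w :
  (forall a, a \in w -> exists2 w', word_over S w' & rconv R [:: a] w') ->
  exists2 w', word_over S w' & rconv R w w'.
Proof.
elim: w => [|a w IH] expand; first by exists [::] => //; exact: rt_refl.
have [wa Swa awa] := expand a (mem_head a w).
have [w' Sw' ww'] := IH (fun b bw => expand b (mem_behead (s := a :: w) bw)).
by exists (wa ++ w'); [rewrite /word_over all_cat; apply/andP | exact: (rconv_cat awa ww')].
Qed.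

End Rewriting.

Section TietzeSequences.
Variable A : choiceType.
Implicit Types (P : pres A) (S : pred A) (B C : {fset (seq A * seq A)}).

Lemma tietze_seq_consl P1 P2 P3 m :
  tietze_either P1 P2 -> tietze_seq P2 P3 m -> tietze_seq P1 P3 m.+1.
Proof.
move=> P12 P23; elim: P23 P12 => [P|Q1 Q2 Q3 k _ IH Q23] P12.
  exact: TScons (TSnil _) P12.
exact: TScons (IH P12) Q23.
Qed.

Lemma tietze_seq_cat P1 P2 P3 m m' :
  tietze_seq P1 P2 m -> tietze_seq P2 P3 m' -> tietze_seq P1 P3 (m + m').
Proof.
move=> P12 P23; elim: P23 P12 => [P|Q1 Q2 Q3 k _ IH Q23] P12; first by rewrite addn0.
by rewrite addnS; exact: TScons (IH P12) Q23.
Qed.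

Lemma tietze_seq_replace S B C q r q' r' :
  rels_over S C -> B `<=` C -> (q, r) \in C -> (q, r) \notin B -> (q', r') != (q, r) ->
  word_over S q' -> word_over S r' -> rconv B q q' -> rconv B r r' ->
  tietze_seq (Pres S C) (Pres S ((C `|` [fset (q', r')]) `\ (q, r))) 2.
Proof.
move=> C_over BC qrC qrB qr'_neq Sq' Sr' qq' rr'.
set C0 := C `|` [fset (q', r')].
have C0_over : rels_over S C0.
  by move=> p; rewrite in_fsetU in_fset1 => /orP[/C_over // | /eqP -> /=]; rewrite Sq' Sr'.
have BC0 : B `<=` C0 `\ (q, r).
  apply/fsubsetP => p pB; rewrite in_fsetD1 in_fsetU (fsubsetP BC _ pB) andbT.
  by apply: contraNneq qrB => <-.
have qr'C0 : (q', r') \in C0 `\ (q, r) by rewrite in_fsetD1 qr'_neq in_fsetU in_fset1 eqxx orbT.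
have add : tietze (Pres S C) (Pres S C0).
  apply: RelPlus => //; apply: (rt_trans _ _ _ q); first exact/rconv_sym/(rconv_subset BC).
  apply: (rt_trans _ _ _ r); [exact: rconv_rel | exact: rconv_subset BC rr'].
have remove : tietze (Pres S C0) (Pres S (C0 `\ (q, r))).
  apply: RelMinus => //; first by rewrite in_fsetU qrC.
  apply: (rt_trans _ _ _ q'); first exact: rconv_subset BC0 qq'.
  apply: (rt_trans _ _ _ r'); [exact: rconv_rel | exact/rconv_sym/(rconv_subset BC0)].
exact: tietze_seq_consl (or_introl add) (TScons (TSnil _) (or_introl remove)).
Qed.

End TietzeSequences.

Lemma acyclic_wf (V : choiceType) (E : V -> V -> Prop) (S : {fset V}) :
  (forall x y, E x y -> y \in S) -> acyclic E -> well_founded (fun y x => E x y).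
Proof.
move=> E_S E_acyclic.
(* Along an edge x -> y, reach y is a proper subset of reach x: by acyclicity it misses y. *)
pose reach x := [fset z in S | `[< clos_trans V E x z >]].
apply: (well_founded_lt_compat _ (fun x => #|` reach x|)) => y x xy; apply/ltP.
apply: fproper_ltn_card; rewrite fproperE; apply/andP; split.
  apply/fsubsetP => z; rewrite !inE /= => /andP[zS /asboolP yz]; rewrite zS /=.
  by apply/asboolP; apply: t_trans (t_step _ _ _ _ xy) yz.
apply/fsubsetP => /(_ y); rewrite !inE /= (E_S _ _ xy) /=.
have -> : `[< clos_trans V E x y >] by apply/asboolP; apply: t_step.
by move=> /(_ isT) /asboolP /E_acyclic.
Qed.

Lemma acyclic_transp (V : Type) (E : V -> V -> Prop) : acyclic E -> acyclic (transp V E).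
Proof. by move=> E_acyclic v /clos_trans_transp_permute; exact: E_acyclic. Qed.

Section Reduction.
Variables (A : choiceType) (Sigma Sigma' : pred A) (Pi : {fset A}) (wx : A -> seq A).
Hypothesis Sigma'_sub : forall a, Sigma' a -> Sigma a.
Hypothesis Pi_def : forall a, (a \in Pi) = Sigma a && ~~ Sigma' a.
Hypothesis wx_over : forall x, x \in Pi -> word_over Sigma (wx x).

Definition defs (P : {fset A}) : {fset (seq A * seq A)} := [fset ([:: x], wx x) | x in P].

Local Notation D := (defs Pi).

Hypothesis D_acyclic : acyclic (derived_edge Pi D).

Lemma word_over_Sigma w : word_over Sigma' w -> word_over Sigma w.
Proof. exact: sub_all. Qed.

Lemma Pi_notSigma' x : x \in Pi -> ~~ Sigma' x.
Proof. by rewrite Pi_def => /andP[]. Qed.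

Lemma derived_edgeE x y : derived_edge Pi D x y <-> [/\ x \in Pi, y \in Pi & y \in wx x].
Proof.
split=> [[xPi [yPi [w [/imfsetP[z zPi [-> ->]] yw]]]] | [xPi yPi yw]] //.
by split=> //; split=> //; exists (wx x); split=> //; apply/imfsetP; exists x.
Qed.

Lemma letter_expand a : Sigma a -> exists2 w, word_over Sigma' w & rconv D [:: a] w.
Proof.
have keep b : Sigma' b -> exists2 w, word_over Sigma' w & rconv D [:: b] w.
  by move=> Sb; exists [:: b]; [rewrite /word_over /= Sb | exact: rt_refl].
have edge_wf : well_founded (fun y x => derived_edge Pi D x y).
  by apply: (acyclic_wf (S := Pi)) => // x y /derived_edgeE[].
elim/(well_founded_ind edge_wf): a => a IH Sa.
have [/keep // | Sa'] := boolP (Sigma' a).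
have aPi : a \in Pi by rewrite Pi_def Sa.
have [w Sw aw] : exists2 w, word_over Sigma' w & rconv D (wx a) w.
  apply: rconv_letterwise => y ya; have Sy := allP (wx_over aPi) y ya.
  have [/keep // | Sy'] := boolP (Sigma' y).
  by apply: IH => //; apply/derived_edgeE; split=> //; rewrite Pi_def Sy Sy'.
by exists w => //; apply: rt_trans aw; apply/rconv_rel/imfsetP; exists a.
Qed.

Lemma word_expand w : word_over Sigma w -> exists2 w', word_over Sigma' w' & rconv D w w'.
Proof. by move=> /allP Sw; apply: rconv_letterwise => a /Sw /letter_expand. Qed.

Lemma defs_not_rel_over p : p \in D -> ~~ rel_over Sigma' p.
Proof.
by move=> /imfsetP[x /Pi_notSigma' xS' ->]; rewrite /rel_over /word_over /= (negbTE xS').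
Qed.

Lemma tietze_seq_expand_rels n : forall C X,
  #|` X| = n -> rels_over Sigma C -> D `<=` C -> X `<=` C `\` D ->
  (forall p, p \in X -> ~~ rel_over Sigma' p) ->
  exists2 N, rels_over Sigma' N &
    (#|` N| <= n)%N /\ tietze_seq (Pres Sigma C) (Pres Sigma ((C `\` X) `|` N)) (2 * n).
Proof.
elim: n => [|n IH] C X X_card C_over DC XC X_bad.
  exists fset0 => //; rewrite (cardfs0_eq X_card) fsetD0 fsetU0; split=> //; exact: TSnil.
have [[q r] qrX] : exists p, p \in X by apply/fset0Pn; rewrite -cardfs_gt0 X_card.
have /andP[qrD qrC] : ((q, r) \notin D) && ((q, r) \in C) by rewrite -in_fsetD (fsubsetP XC).
have /andP[Sq Sr] := C_over _ qrC.
have [q' Sq' qq'] := word_expand Sq.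
have [r' Sr' rr'] := word_expand Sr.
have qr'X : (q', r') \notin X by apply: contraL (X_bad _) _; rewrite /rel_over Sq' Sr'.
have qr'_neq : (q', r') != (q, r) by apply: contraNneq qr'X => ->.
set C1 := (C `|` [fset (q', r')]) `\ (q, r).
have [N' N'_over [N'_card steps]] : exists2 N', rels_over Sigma' N' &
    (#|` N'| <= n)%N /\
    tietze_seq (Pres Sigma C1) (Pres Sigma ((C1 `\` (X `\ (q, r))) `|` N')) (2 * n).
  apply: IH.
  - by move: X_card; rewrite (cardfsD1 (q, r)) qrX add1n => -[].
  - move=> p; rewrite in_fsetD1 in_fsetU in_fset1 => /andP[_ /orP[/C_over // | /eqP -> /=]].
    by rewrite !word_over_Sigma.
  - apply/fsubsetP => p pD; rewrite in_fsetD1 in_fsetU (fsubsetP DC _ pD) andbT.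
    by apply: contraNneq qrD => <-.
  - apply/fsubsetP => p; rewrite !in_fsetD1 => /andP[pqr /(fsubsetP XC)].
    by rewrite !inE pqr => /andP[-> ->].
  - by move=> p; rewrite in_fsetD1 => /andP[_ /X_bad].
exists ((q', r') |` N').
  by move=> p; rewrite in_fset1U => /orP[/eqP -> | /N'_over //]; rewrite /= Sq' Sr'.
split; first by rewrite cardfsU1 -add1n leq_add ?leq_b1.
have -> : (C `\` X) `|` ((q', r') |` N') = (C1 `\` (X `\ (q, r))) `|` N'.
  apply/fsetP => p; rewrite !inE.
  have [-> | p_ne'] := eqVneq p (q', r'); first by rewrite qr'_neq (negbTE qr'X) !orbT.
  have [-> | _] := eqVneq p (q, r); first by rewrite qrX.
  by rewrite orbF.
rewrite mulnS; apply: tietze_seq_cat steps.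
apply: tietze_seq_replace qq' rr' => //; exact: word_over_Sigma.
Qed.

Definition succ_closed (P : {fset A}) :=
  forall x y, x \in P -> y \in wx x -> y \in Pi -> y \in P.

Lemma rels_over_defs S P Q :
  (forall a, S a = Sigma' a || (a \in P)) -> P `<=` Pi -> succ_closed P ->
  rels_over Sigma' Q -> rels_over S (defs P `|` Q).
Proof.
move=> S_def PPi P_closed Q_over p; rewrite in_fsetU.
case/orP=> [/imfsetP[x xP ->] | /Q_over/andP[Q1 Q2]] /=.
  rewrite /word_over /= S_def xP orbT; apply/allP => y yx; rewrite S_def.
  have [// | Sy'] := boolP (Sigma' y); have Sy := allP (wx_over (fsubsetP PPi _ xP)) y yx.
  by rewrite (P_closed x) // Pi_def Sy Sy'.
have S'S : subpred Sigma' S by move=> a; rewrite S_def => ->.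
by rewrite /word_over (sub_all S'S Q1) (sub_all S'S Q2).
Qed.

Lemma exists_source P : P != fset0 -> P `<=` Pi ->
  exists2 x, x \in P & forall y, y \in P -> x \notin wx y.
Proof.
move=> /fset0Pn[x0 x0P] PPi.
have edge_wf : well_founded (derived_edge Pi D).
  by apply: (acyclic_wf (S := Pi) _ (acyclic_transp D_acyclic)) => x y /derived_edgeE[].
elim/(well_founded_ind edge_wf): x0 x0P => x IH xP.
have [[y yP xy] | no_pred] := pselect (exists2 y, y \in P & x \in wx y).
  by apply: (IH y) => //; apply/derived_edgeE; split=> //; exact: fsubsetP PPi _ _.
by exists x => // y yP; apply/negP => xy; apply: no_pred; exists y.
Qed.

Lemma defs_fsetD1 P Q x : ~~ Sigma' x -> rels_over Sigma' Q ->
  (defs P `|` Q) `\ ([:: x], wx x) = defs (P `\ x) `|` Q.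
Proof.
move=> xS' Q_over; apply/fsetP => p; rewrite in_fsetD1 !in_fsetU.
have [-> | p_ne] := eqVneq p ([:: x], wx x).
  apply/esym/negbTE; rewrite negb_or; apply/andP; split.
    by apply/imfsetP => -[z]; rewrite in_fsetD1 => /andP[zx _] [xz _]; rewrite xz eqxx in zx.
  by apply: contra xS' => /Q_over; rewrite /word_over /= andbT => /andP[].
congr (_ || _); apply/imfsetP/imfsetP => -[z zP pz]; exists z => //.
  by rewrite in_fsetD1 zP andbT; apply: contraNneq p_ne => zx; rewrite pz zx.
by move: zP; rewrite in_fsetD1 => /andP[].
Qed.

Lemma tietze_seq_remove_gens n : forall P Q S,
  #|` P| = n -> P `<=` Pi -> succ_closed P -> rels_over Sigma' Q ->
  (forall a, S a = Sigma' a || (a \in P)) ->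
  tietze_seq (Pres S (defs P `|` Q)) (Pres Sigma' Q) n.
Proof.
elim: n => [|n IH] P Q S P_card PPi P_closed Q_over S_def.
  have P0 := cardfs0_eq P_card.
  have -> : S = Sigma' by apply: funext => a; rewrite S_def P0 inE orbF.
  by rewrite P0 /defs imfset0 fset0U; exact: TSnil.
have [x xP x_source] : exists2 x, x \in P & forall y, y \in P -> x \notin wx y.
  by apply: exists_source PPi; rewrite -cardfs_gt0 P_card.
have xS' := Pi_notSigma' (fsubsetP PPi _ xP).
have PxPi : P `\ x `<=` Pi by apply: fsubset_trans (fsubD1set P x) PPi.
have Px_closed : succ_closed (P `\ x).
  move=> z y; rewrite !in_fsetD1 => /andP[_ zP] yz yPi.
  by rewrite (P_closed z y) // andbT; apply: contraNneq (x_source z zP) => <-.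
pose S' a := Sigma' a || (a \in P `\ x).
apply: (@tietze_seq_consl _ _ (Pres S' (defs (P `\ x) `|` Q))).
  left; rewrite -defs_fsetD1 //; apply: GenMinus.
  - exact: rels_over_defs.
  - by rewrite in_fsetU; apply/orP; left; apply/imfsetP; exists x.
  - move=> a; rewrite /S' S_def in_fsetD1.
    by case: (eqVneq a x) => [-> | _]; rewrite ?(negbTE xS') ?andbF ?andbT.
  - by rewrite defs_fsetD1 //; exact: rels_over_defs.
apply: IH => //; by move: P_card; rewrite (cardfsD1 x) xP add1n => -[].
Qed.

Lemma tietze_reduction R : rels_over Sigma R -> D `<=` R ->
  let n := (#|` R| - #|` [fset p in R | rel_over Sigma' p]| - #|` D|)%N in
  exists2 Q, rels_over Sigma' Q &
    (#|` Q| <= #|` R `\` D|)%N /\ tietze_seq (Pres Sigma R) (Pres Sigma' Q) (2 * n + #|` Pi|).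
Proof.
move=> R_over DR n.
set RS := [fset p in R | rel_over Sigma' p].
set X := (R `\` D) `\` RS.
have RS_sub : RS `<=` R `\` D.
  apply/fsubsetP => p; rewrite !inE /= => /andP[pR p_over]; rewrite pR andbT.
  by apply: contraL p_over; exact: defs_not_rel_over.
have X_card : #|` X| = n by rewrite cardfsDS // cardfsDS // subnAC.
have X_bad p : p \in X -> ~~ rel_over Sigma' p.
  by rewrite !inE /= => /andP[+ /andP[_ pR]]; rewrite pR.
have [N N_over [N_card steps]] := tietze_seq_expand_rels X_card R_over DR (fsubsetDl _ _) X_bad.
have Q_over : rels_over Sigma' (RS `|` N).
  by move=> p; rewrite in_fsetU => /orP[| /N_over //]; rewrite inE /= => /andP[].
exists (RS `|` N) => //; split.
  apply: leq_trans (_ : _ <= #|` RS| + #|` N|)%N _; first by rewrite cardfsU leq_subr.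
  by rewrite -(cardfsID RS (R `\` D)) (fsetIidPr RS_sub) leq_add2l -/X X_card.
have RXN : (R `\` X) `|` N = D `|` (RS `|` N).
  apply/fsetP => p; rewrite /X !in_fsetU !in_fsetD.
  have [pRS | pRS] := boolP (p \in RS).
    by move: (fsubsetP RS_sub _ pRS); rewrite in_fsetD => /andP[/negbTE -> ->]; rewrite orbT.
  have [pD | pD] := boolP (p \in D); first by rewrite (fsubsetP DR _ pD).
  by case: (p \in R).
rewrite RXN in steps; apply: tietze_seq_cat steps _.
apply: tietze_seq_remove_gens => // a.
rewrite Pi_def; have [/Sigma'_sub -> // | _] := boolP (Sigma' a).
by rewrite andbT.
Qed.

End Reduction.

Theorem theorem8 (A : choiceType) (Sigma Sigma' : pred A) (Pi : {fset A})
    (R D : {fset (seq A * seq A)}) :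
  (forall a, Sigma' a -> Sigma a) ->
  (forall a, (a \in Pi) = Sigma a && ~~ Sigma' a) ->
  rels_over Sigma R ->
  D `<=` R ->
  defining_family Sigma Pi D ->
  acyclic (derived_edge Pi D) ->
  let n := (#|` R| - #|` [fset p in R | word_over Sigma' p.1 && word_over Sigma' p.2]|
            - #|` D|)%N in
  let k := #|` Pi| in
  exists (Q : {fset (seq A * seq A)}) (m : nat),
    rels_over Sigma' Q /\ (#|` Q| <= #|` R `\` D|)%N /\
    (n + k <= m <= 2 * n + k)%N /\
    tietze_seq (Pres Sigma R) (Pres Sigma' Q) m.
Proof.
move=> Sigma'_sub Pi_def R_over DR [wx [wx_over D_def]] D_acyclic n k; subst D.
have [Q Q_over [Q_card steps]] := tietze_reduction Sigma'_sub Pi_def wx_over D_acyclic R_over DR.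
exists Q, (2 * n + k)%N; do !split=> //.
by rewrite leqnn andbT leq_add2r leq_pmull.
Qed.
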